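(* Let $N\ge K\ge 1$ be integers and let $\mathcal{S}$ be the collection of all subsets $S\subseteq[N]$ with $1\le |S|\le K$. For every $S\in\mathcal{S}$ and all $v,v^\star\in[0,1]^N$, $$\frac{1}{2(K+1)^4}\sum_{i\in S}(v_i-v^\star_i)^2\;\le\;\|\mu(S,v)-\mu(S,v^\star)\|_2^2\;\le\;2\,\mathbb{E}_{i\sim\mu(S,v^\star)}\big[\ell_{\log}(\mu(S,v),i)-\ell_{\log}(\mu(S,v^\star),i)\big].$$
   Context: For $S\in\mathcal{S}$ and $v\in[0,1]^N$, $\mu(S,v)$ is the probability distribution on $\{0,1,\dots,N\}$ (viewed as a vector in $\mathbb{R}^{N+1}$) given by $\mu_i(S,v)=\frac{v_i}{1+\sum_{j\in S}v_j}$ for $i\in S$, $\mu_0(S,v)=\frac{1}{1+\sum_{j\in S}v_j}$, and $\mu_i(S,v)=0$ for $i\notin S\cup\{0\}$. For a distribution $\mu$ on $\{0,\dots,N\}$ and an outcome $i$, the log loss is $\ell_{\log}(\mu,i)=-\log\mu_i$. *)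

From HB Require Import structures.
From mathcomp Require Import all_boot all_order all_algebra.
From mathcomp Require Import all_classical all_reals all_analysis.
Set Implicit Arguments. Unset Strict Implicit. Unset Printing Implicit Defensive.
Import Order.TTheory GRing.Theory Num.Theory.
Local Open Scope ring_scope.

(* Items are 'I_N (representing [N] = {1,...,N}); outcomes are option 'I_N,
   with None representing the no-purchase outcome 0. *)

Definition mnl {R : realType} {N : nat} (S : {set 'I_N}) (v : 'I_N -> R)
    (o : option 'I_N) : R :=
  match o with
  | None => 1 / (1 + \sum_(j in S) v j)
  | Some i => if i \in S then v i / (1 + \sum_(j in S) v j) else 0
  end.

Definition logloss {R : realType} {N : nat} (mu : option 'I_N -> R)
    (o : option 'I_N) : \bar R :=
  if 0 < mu o then ((- ln (mu o))%:E)%E else (+oo)%E.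

Definition expect {R : realType} {N : nat} (p : option 'I_N -> R)
    (f : option 'I_N -> \bar R) : \bar R :=
  \sum_(o : option 'I_N | (0 < p o)%R) ((p o)%:E * f o)%E.

Definition sqdist {R : realType} {N : nat} (p q : option 'I_N -> R) : R :=
  \sum_(o : option 'I_N) (p o - q o) ^+ 2.

From HB Require Import structures.
From mathcomp Require Import all_boot all_order all_algebra.
From mathcomp Require Import all_classical all_reals all_analysis.
From mathcomp Require Import ring lra.
Import Order.TTheory GRing.Theory Num.Theory.
Local Open Scope ring_scope.

(* Lower bound: with A, B the normalisers of mu(S,v), mu(S,vs), the identity
   v_i - vs_i = A (v_i/A - vs_i/B) - A vs_i (1/A - 1/B) expresses each
   coordinate gap through two coordinates of mu(S,v) - mu(S,vs), and
   A <= K + 1.  Upper bound: coordinatewise,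
   (q - p) + (p - q)^2/2 <= q (ln q - ln p) for p, q in (0,1], by monotonicity
   of x - q ln x - (x - q)^2/2 between p and q.  Summed over the support of
   mu(S,vs), the linear terms add up to the mass of mu(S,v) off that support,
   which dominates the squared gaps there. *)

Lemma sum_option {R : realType} (T : finType) (F : option T -> R) :
  \sum_(o : option T) F o = F None + \sum_(i : T) F (Some i).
Proof.
rewrite (bigD1 None) //=; congr (_ + _).
rewrite (reindex_omap Some (fun o => o)) /=; last by case.
by apply: eq_bigl => j; rewrite eqxx.
Qed.

Lemma distr_le1 {R : realType} {T : finType} {P : T -> R} :
  (forall o, 0 <= P o) -> \sum_o P o = 1 -> forall o, P o <= 1.
Proof.
move=> P0 P1 o; rewrite -P1 (bigD1 o) //= lerDl.
by apply: sumr_ge0 => j _.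
Qed.

Lemma sumr_le_card {R : realType} {T : finType} (A : {set T}) (v : T -> R) :
  (forall i, v i <= 1) -> \sum_(j in A) v j <= #|A|%:R.
Proof.
move=> v1; rewrite -sumr_const; exact: ler_sum.
Qed.

Section MnlDistribution.
Context {R : realType} {N : nat} (S : {set 'I_N}) (v : 'I_N -> R).
Hypothesis hv : forall i, 0 <= v i <= 1.

Lemma mnl_norm_gt0 : 0 < 1 + \sum_(j in S) v j.
Proof.
have : 0 <= \sum_(j in S) v j by apply: sumr_ge0 => i _; case/andP: (hv i).
lra.
Qed.

Lemma mnl_ge0 o : 0 <= mnl S v o.
Proof.
have D0 := ltW mnl_norm_gt0.
case: o => [i|] /=; last by rewrite divr_ge0.
by case: ifP => // _; case/andP: (hv i) => vi0 _; rewrite divr_ge0.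
Qed.

Lemma sum_mnl : \sum_o mnl S v o = 1.
Proof.
rewrite sum_option /= -big_mkcond /= -mulr_suml -mulrDl.
by rewrite divff // gt_eqF // mnl_norm_gt0.
Qed.

End MnlDistribution.

Lemma sqdist_mnl {R : realType} {N : nat} (S : {set 'I_N}) (v vs : 'I_N -> R) :
  let A := 1 + \sum_(j in S) v j in let B := 1 + \sum_(j in S) vs j in
  sqdist (mnl S v) (mnl S vs)
    = (1 / A - 1 / B) ^+ 2 + \sum_(i in S) (v i / A - vs i / B) ^+ 2.
Proof.
move=> A B; rewrite /sqdist sum_option /=; congr (_ + _).
rewrite [RHS]big_mkcond /=; apply: eq_bigr => i _.
by case: ifP => _ //; rewrite subrr expr2 mulr0.
Qed.

Lemma sqr_subr_le_rescaled {R : realFieldType} (a : R) {b A B M : R} :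
  0 < A -> 0 < B -> A <= M -> 0 <= b <= 1 ->
  (a - b) ^+ 2 <= 2 * M ^+ 2 * ((a / A - b / B) ^+ 2 + (1 / A - 1 / B) ^+ 2).
Proof.
move=> A0 B0 AM /andP[b0 b1].
set x := a / A - b / B; set y := 1 / A - 1 / B.
have -> : a - b = A * x - A * b * y by rewrite /x /y; field; rewrite !gt_eqF.
have A2M2 : A ^+ 2 <= M ^+ 2.
  by rewrite lerXn2r // ?nnegrE ltW // (lt_le_trans A0).
have by_y : b ^+ 2 * y ^+ 2 <= y ^+ 2 by rewrite ler_piMl ?sqr_ge0 // expr_le1.
have Ax : A ^+ 2 * x ^+ 2 <= M ^+ 2 * x ^+ 2 by rewrite ler_wpM2r ?sqr_ge0.
have Aby : A ^+ 2 * (b ^+ 2 * y ^+ 2) <= M ^+ 2 * y ^+ 2.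
  apply: le_trans (ler_wpM2r (sqr_ge0 y) A2M2).
  by rewrite ler_wpM2l ?sqr_ge0.
have := sqr_ge0 (A * x + A * b * y); rewrite !expr2 in Ax Aby *; lra.
Qed.

Lemma sqdist_mnl_lower_bound {R : realType} (N K : nat) (S : {set 'I_N})
    (v vs : 'I_N -> R) :
  (#|S| <= K)%N -> (forall i, 0 <= v i <= 1) -> (forall i, 0 <= vs i <= 1) ->
  1 / (2 * (K%:R + 1) ^+ 4) * \sum_(i in S) (v i - vs i) ^+ 2
    <= sqdist (mnl S v) (mnl S vs).
Proof.
move=> SK hv hvs; rewrite sqdist_mnl.
set A := 1 + _; set B := 1 + _; set M := K%:R + 1.
set y := 1 / A - 1 / B; set X := \sum_(i in S) (_ / A - _ / B) ^+ 2.
have A0 : 0 < A := mnl_norm_gt0 S v hv.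
have B0 : 0 < B := mnl_norm_gt0 S vs hvs.
have SM : #|S|%:R <= M by rewrite /M ler_wpDr // ler_nat.
have AM : A <= M.
  rewrite /A addrC lerD2r (le_trans (sumr_le_card S v _)) ?ler_nat //.
  by move=> i; case/andP: (hv i).
have M1 : 1 <= M by rewrite /M lerDr.
have M21 : M <= M ^+ 2 by rewrite expr2 ler_peMl // (le_trans ler01).
have X0 : 0 <= X by apply: sumr_ge0 => i _; exact: sqr_ge0.
have gaps : \sum_(i in S) (v i - vs i) ^+ 2
    <= 2 * M ^+ 2 * (X + #|S|%:R * y ^+ 2).
  apply: le_trans (ler_sum _ (fun i _ =>
    sqr_subr_le_rescaled (v i) A0 B0 AM (hvs i))) _.
  by rewrite -mulr_sumr big_split /= sumr_const -[_ *+ #|S|]mulr_natl.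
have folded : X + #|S|%:R * y ^+ 2 <= M ^+ 2 * (y ^+ 2 + X).
  have : #|S|%:R * y ^+ 2 <= M ^+ 2 * y ^+ 2
    by rewrite ler_wpM2r ?sqr_ge0 // (le_trans SM).
  have : X <= M ^+ 2 * X by rewrite ler_peMl // (le_trans M1).
  lra.
have M20 : 0 < M ^+ 2 by rewrite exprn_gt0 // (lt_le_trans ltr01).
rewrite mul1r mulrC ler_pdivrMr ?mulr_gt0 ?exprn_gt0 // ?(lt_le_trans ltr01) //.
apply: (le_trans gaps); rewrite -[M ^+ 4]/(M ^+ (2 + 2)) exprD.
have -> : (y ^+ 2 + X) * (2 * (M ^+ 2 * M ^+ 2))
    = 2 * M ^+ 2 * (M ^+ 2 * (y ^+ 2 + X)) by ring.
by rewrite ler_wpM2l // mulr_ge0 // ltW.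
Qed.

Section LnRatioBound.
Context {R : realType} (q : R).

Let h (x : R) := x - q * ln x - (x - q) ^+ 2 / 2.

Let h_derive {x : R} : 0 < x -> is_derive x 1 h (1 - q * x^-1 - (x - q)).
Proof.
move=> x0; have := is_derive1_ln x0 => Hl.
apply: is_derive_eq.
rewrite !scaler0 !subr0 add0r -mulr2n /GRing.scale /= mulr1.
by congr (_ - _); rewrite mulr2n; field.
Qed.

Let h_derive1 (x : R) : 0 < x -> derive1 h x = (x - q) * (1 - x) / x.
Proof.
move=> x0; have Hd := h_derive x0; rewrite derive1E derive_val.
by field; rewrite gt_eqF.
Qed.

Let h_derivable {a : R} (b : R) : 0 < a -> {in `[a, b], forall x, derivable h x 1}.
Proof.
move=> a0 x; rewrite in_itv /= => /andP[ax _].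
by have Hd := h_derive (lt_le_trans a0 ax); exact: ex_derive.
Qed.

Lemma lnB_quadratic_lower_bound (p : R) : 0 < q -> q <= 1 -> 0 < p -> p <= 1 ->
  (q - p) + (p - q) ^+ 2 / 2 <= q * (ln q - ln p).
Proof.
move=> q0 q1 p0 p1.
suff : h q <= h p by rewrite /h; lra.
have [pq|qp] := leP p q.
- apply: (@ler0_derive1_le_cc _ h p q) => //.
  + by move=> x /subset_itv_oo_cc; apply: h_derivable.
  + move=> x; rewrite in_itv /= => /andP[px xq].
    have x0 : 0 < x by apply: lt_trans px.
    rewrite h_derive1 // mulr_le0_ge0 ?invr_ge0 ?(ltW x0) //.
    by rewrite mulr_le0_ge0 //; lra.
  + exact: derivable_within_continuous (h_derivable q p0).
  + by rewrite in_itv /= lexx pq.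
  + by rewrite in_itv /= lexx pq.
- apply: (@ger0_derive1_le_cc _ h q p) => //.
  + by move=> x /subset_itv_oo_cc; apply: h_derivable.
  + move=> x; rewrite in_itv /= => /andP[qx xp].
    have x0 : 0 < x by apply: lt_trans qx.
    by rewrite h_derive1 // divr_ge0 ?(ltW x0) // mulr_ge0 //; lra.
  + exact: derivable_within_continuous (h_derivable p q0).
  + by rewrite in_itv /= lexx ltW.
  + by rewrite in_itv /= lexx ltW.
  + exact: ltW.
Qed.

End LnRatioBound.

Section SqdistLogloss.
Context {R : realType} {N : nat} (P Q : option 'I_N -> R).
Hypotheses (P0 : forall o, 0 <= P o) (Q0 : forall o, 0 <= Q o).
Hypotheses (P1 : \sum_o P o = 1) (Q1 : \sum_o Q o = 1).

Lemma sqdist_le_support_sum :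
  sqdist P Q <= 2 * \sum_(o | 0 < Q o) ((Q o - P o) + (P o - Q o) ^+ 2 / 2).
Proof.
have offQ o : ~~ (0 < Q o) -> Q o = 0.
  by rewrite -leNgt => Qo; apply/le_anti; rewrite Qo Q0.
have Qoff : \sum_(o | ~~ (0 < Q o)) Q o = 0 by apply: big1 => o /offQ.
have Poff : 0 <= \sum_(o | ~~ (0 < Q o)) P o by apply: sumr_ge0.
have sqr_off : \sum_(o | ~~ (0 < Q o)) (P o - Q o) ^+ 2
    <= \sum_(o | ~~ (0 < Q o)) P o.
  apply: ler_sum => o /offQ ->.
  by rewrite subr0 expr2 ler_piMr // (distr_le1 P0 P1).
have split_supp F : \sum_o F o
    = \sum_(o | 0 < Q o) F o + \sum_(o | ~~ (0 < Q o)) F o := bigID _ _ _.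
move: P1 Q1; rewrite /sqdist !split_supp => sP sQ.
rewrite big_split /= sumrB -mulr_suml; lra.
Qed.

Lemma sqdist_le_expect_loglossB :
  ((sqdist P Q)%:E <= 2%:E * expect Q (fun o => logloss P o - logloss Q o))%E.
Proof.
apply: (@le_trans _ _
  ((2 * \sum_(o | 0 < Q o) ((Q o - P o) + (P o - Q o) ^+ 2 / 2))%:E)).
  by rewrite lee_fin sqdist_le_support_sum.
rewrite EFinM lee_wpmul2l ?lee_fin // /expect -sumEFin.
apply: lee_sum => o Qo; rewrite /logloss Qo.
case: ifP => Po.
- rewrite -EFinB -EFinM lee_fin opprK [- ln _ + _]addrC.
  by rewrite lnB_quadratic_lower_bound ?(distr_le1 P0 P1) ?(distr_le1 Q0 Q1).
- by rewrite /= muleC gt0_mulye ?leey // lte_fin.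
Qed.

End SqdistLogloss.

Theorem lemma3 (R : realType) (N K : nat) (hK1 : (1 <= K)%N) (hKN : (K <= N)%N)
    (S : {set 'I_N}) (hS : (1 <= #|S| <= K)%N)
    (v vs : 'I_N -> R)
    (hv : forall i, 0 <= v i <= 1) (hvs : forall i, 0 <= vs i <= 1) :
  1 / (2 * (K%:R + 1) ^+ 4) * \sum_(i in S) (v i - vs i) ^+ 2
    <= sqdist (mnl S v) (mnl S vs)
  /\ ((sqdist (mnl S v) (mnl S vs))%:E
    <= 2%:E * expect (mnl S vs)
         (fun o => logloss (mnl S v) o - logloss (mnl S vs) o))%E.
Proof.
split.
- by apply: sqdist_mnl_lower_bound => //; case/andP: hS.
- apply: sqdist_le_expect_loglossB.
  + exact: mnl_ge0.
  + exact: mnl_ge0.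
  + exact: sum_mnl.
  + exact: sum_mnl.
Qed.
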